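(* Assume $\operatorname{add}(\mathcal N)=\operatorname{cov}(\mathcal N)$. Then $\mathcal{ND}_{\operatorname{add}(\mathcal N)}$ is strongly $\mathfrak c$-algebrable in $\left(\mathbb R^{[0,1]}\right)^{\operatorname{add}(\mathcal N)}$.
   Context: For a regular infinite cardinal $\kappa$, a $\kappa$-sequence $(x_\alpha)_{\alpha<\kappa}$ converges to $x$ if for every neighbourhood $U$ of $x$ there is $\alpha_0<\kappa$ with $x_\alpha\in U$ for all $\alpha_0<\alpha<\kappa$; $\left(\mathbb R^{[0,1]}\right)^{\kappa}$ is the commutative real algebra of $\kappa$-sequences of functions $[0,1]\to\mathbb R$ with indexwise operations. $\lambda$ is Lebesgue measure, $\mathcal N$ the null subsets of $[0,1]$; $\operatorname{add}(\mathcal N)$ the least cardinality of a family of null sets with non-null union, $\operatorname{cov}(\mathcal N)$ the least cardinality of a family of null sets covering $[0,1]$. $\mathcal{ND}_{\kappa}$: $\kappa$-sequences of Lebesgue measurable $f_\alpha:[0,1]\to\mathbb R$ such that there is an integrable $g$ with $|f_\alpha|\le g$ a.e. for all $\alpha$, $f_\alpha\to f$ a.e. for some integrable $f$, and $\int|f_\alpha-f|\,d\lambda\not\to0$. $S$ is strongly $\mu$-algebrable if there is a set $X$ of $\mu$ algebraically independent elements such that every nonzero element of the (non-unital) algebra generated by $X$ belongs to $S$. *)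

From HB Require Import structures.
From mathcomp Require Import all_boot all_order all_algebra.
From mathcomp Require Import all_classical all_reals all_analysis.
From mathcomp Require mpoly.
Set Implicit Arguments. Unset Strict Implicit. Unset Printing Implicit Defensive.
Import Order.TTheory GRing.Theory Num.Theory.
Import numFieldNormedType.Exports.
Local Open Scope classical_set_scope.
Local Open Scope ring_scope.

Notation leb R := (@completed_lebesgue_measure R).
(* The real line carrying the Lebesgue (completed) measurable sets; its
   carrier is (convertible to) R. *)
Notation LR R := (caratheodory_type (R:=R)
   (T:=lebesgue_stieltjes_measure_ocitv_type__canonical__measurable_structure_SemiRingOfSets R)
   (wlength (@idfun R))^*%mu).
Notation I01 R := (`[(0:R), (1:R)]%classic : set (LR R)).

Definition card_lt (T U : Type) : Prop :=
  ([set: T] #<= [set: U])%card /\ ~ ([set: U] #<= [set: T])%card.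

Definition nullset01 (R : realType) (A : set R) : Prop :=
  A `<=` `[0, 1]%classic /\ (leb R).-negligible A.

(* The index type I has cardinality add(N): some I-indexed family of null
   sets has a non-null union, and every family of null sets of strictly
   smaller cardinality has a null union. *)
Definition has_card_addN (R : realType) (I : Type) : Prop :=
  (exists F : I -> set R, (forall i, nullset01 (F i)) /\
      ~ nullset01 (\bigcup_i F i)) /\
  (forall (J : Type), card_lt J I -> forall F : J -> set R,
      (forall j, nullset01 (F j)) -> nullset01 (\bigcup_j F j)).

Definition has_card_covN (R : realType) (I : Type) : Prop :=
  (exists F : I -> set R, (forall i, nullset01 (F i)) /\
      `[0, 1]%classic `<=` \bigcup_i F i) /\
  (forall (J : Type), card_lt J I -> forall F : J -> set R,
      (forall j, nullset01 (F j)) -> ~ (`[0, 1]%classic `<=` \bigcup_j F j)).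

(* (I, lt) is a strict well-order which is an initial ordinal, i.e. it is
   order-isomorphic to the cardinal |I| viewed as a von Neumann ordinal. *)
Definition initial_ordinal (I : Type) (lt : I -> I -> Prop) : Prop :=
  (forall a, ~ lt a a) /\
  (forall a b c, lt a b -> lt b c -> lt a c) /\
  (forall a b, lt a b \/ a = b \/ lt b a) /\
  well_founded lt /\
  (forall a : I, card_lt {b : I | lt b a} I).

Definition kconv (I : Type) (lt : I -> I -> Prop) (T : topologicalType)
    (x : I -> T) (l : T) : Prop :=
  forall U, nbhs l U -> exists a0, forall a, lt a0 a -> U (x a).

Definition ND (R : realType) (I : Type) (lt : I -> I -> Prop)
    (f : I -> R -> R) : Prop :=
  (forall a, measurable_fun (I01 R) (f a : LR R -> R)) /\
  (exists g : R -> R, (leb R).-integrable (I01 R) (EFin \o g) /\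
     forall a, {ae leb R, forall t, `[0, 1]%classic t -> `|f a t| <= g t}) /\
  (exists F : R -> R, (leb R).-integrable (I01 R) (EFin \o F) /\
     {ae leb R, forall t, `[0, 1]%classic t -> kconv lt (fun a => f a t) (F t)} /\
     ~ kconv lt (fun a => (\int[leb R]_(t in I01 R) `|f a t - F t|%:E)%E)
                0%E).

Definition peval (R : realType) (I : Type) (n : nat) (P : mpoly.mpoly n R)
    (x : 'I_n -> I -> R -> R) : I -> R -> R :=
  fun a t => mpoly.meval (fun i => x i a t) P.

(* Equality in (R^[0,1])^I: functions are only considered on [0,1]. *)
Definition eq01 (I : Type) (R : realType) (f g : I -> R -> R) : Prop :=
  forall a t, `[0, 1]%classic t -> f a t = g a t.

(* S is strongly c-algebrable in (R^[0,1])^I: there is a family of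
   continuum-many (indexed injectively by R) algebraically independent
   elements, and every nonzero element of the non-unital algebra they
   generate, i.e. every P(x_1..x_n) with P a nonzero polynomial without
   constant term and x_1..x_n distinct generators, lies in S. *)
Definition strongly_c_algebrable (R : realType) (I : Type)
    (S : (I -> R -> R) -> Prop) : Prop :=
  exists x : R -> I -> R -> R,
    (forall r s, eq01 (x r) (x s) -> r = s) /\
    forall (n : nat) (r : 'I_n -> R), injective r ->
    forall P : mpoly.mpoly n R, (exists m, mpoly.mcoeff m P != 0) -> mpoly.mcoeff (@mpoly.mnm0 n) P = 0 ->
      ~ eq01 (peval P (x \o r)) (fun _ _ => 0) /\ S (peval P (x \o r)).

From HB Require Import structures.
From mathcomp Require Import all_boot all_order all_algebra.
From mathcomp Require Import all_classical all_reals all_analysis.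
From mathcomp Require mpoly.
From mathcomp Require Import lra.
Import (canonicals, coercions) mpoly.
Set Implicit Arguments. Unset Strict Implicit. Unset Printing Implicit Defensive.
Import Order.TTheory GRing.Theory Num.Theory.
Import numFieldNormedType.Exports.
Local Open Scope classical_set_scope.
Local Open Scope ring_scope.

(* For [r : R] let [dexp r t = exp (- t ^ (- e ^ r))].  Substituting
   [t = exp (- w)], a monomial in [dexp r_1, ..., dexp r_n] becomes
   [exp (- sum_i m_i exp (e ^ r_i * w))]; for distinct [r_i] any two such
   exponents are eventually separated by an unbounded gap, so a nonzero
   polynomial is dominated near [t = 0] by a single monomial and has positive
   integral [c] over [0,1].  Cover [0,1] by null sets [(C_b)_{b < kappa}] with
   [kappa = add(N) = cov(N)]; then [N_a = U_{b < a} C_b] is null, and the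
   generator [x_r] at stage [a] is [dexp r] with [N_a] cut out.  A polynomial
   without constant term in the [x_r] equals the same polynomial in the
   [dexp r] off [N_a] and [0] on [N_a]: it is bounded, tends pointwise to [0]
   since every [t] lies eventually in [N_a], yet has constant integral
   [c > 0]. *)

Lemma meval_zero (n : nat) (R : comNzRingType) (P : mpoly.mpoly n R) :
  mpoly.meval (fun _ => 0) P = mpoly.mcoeff mpoly.mnm0 P.
Proof.
have monomial0 (m : mpoly.multinom n) :
    \prod_i (0 : R) ^+ m i = (m == mpoly.mnm0)%:R.
  have [->|m_neq0] := eqVneq m mpoly.mnm0.
    by apply: big1 => i _; rewrite mpoly.mnm0E expr0.
  have [i mi_neq0] : exists i, m i != 0%N.
    apply: contrapT => all0; move/eqP: m_neq0; apply; apply/mpoly.mnmP => i.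
    by rewrite mpoly.mnm0E; apply/eqP/negPn/negP => mi; apply: all0; exists i.
  by rewrite (bigD1 i) //= expr0n (negPf mi_neq0) mul0r.
rewrite mpoly.mevalE; under eq_bigr do rewrite monomial0.
have [P0_in|P0_notin] := boolP (mpoly.mnm0 \in mpoly.msupp P).
  rewrite (big_rem _ P0_in) /= eqxx mulr1 big1_seq ?addr0 // => m /andP[_ m_rem].
  suff /negPf -> : m != mpoly.mnm0 by rewrite mulr0.
  by apply: contraTneq m_rem => ->; rewrite mem_rem_uniqF ?mpoly.msupp_uniq.
rewrite big1_seq => [|m /andP[_ m_in]].
  by move: P0_notin; rewrite mpoly.mcoeff_msupp negbK => /eqP.
suff /negPf -> : m != mpoly.mnm0 by rewrite mulr0.
by apply: contraNneq P0_notin => <-.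
Qed.

Lemma seq_min_exists (T : eqType) (P : T -> T -> Prop) (l : seq T) :
  (forall x y, x != y -> P x y \/ P y x) ->
  (forall x y z, P x y -> P y z -> P x z) ->
  l != [::] -> exists2 x, x \in l & forall y, y \in l -> y != x -> P x y.
Proof.
move=> total trans; elim: l => // a l IH _.
have [->|l_neq0] := eqVneq l [::].
  by exists a; rewrite ?mem_head // => y; rewrite inE => /eqP ->; rewrite eqxx.
have [b b_in b_min] := IH l_neq0.
have [->|ab] := eqVneq a b.
  exists b; rewrite ?mem_head // => y.
  by rewrite inE => /orP[/eqP->|]; [rewrite eqxx|exact: b_min].
case: (total a b ab) => [Pab|Pba].
- exists a; first exact: mem_head.
  move=> y; rewrite inE => /orP[/eqP->|y_in ya]; first by rewrite eqxx.
  have [->|yb] := eqVneq y b; first exact: Pab.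
  exact: trans Pab (b_min y y_in yb).
- exists b; first by rewrite inE b_in orbT.
  by move=> y; rewrite inE => /orP[/eqP->|y_in yb]; [|exact: b_min].
Qed.

Section ExpAsymptotics.
Variable R : realType.

Lemma expRN_mul_cvgy (k : R) : 0 < k -> expR (- (k * w)) @[w --> +oo] --> 0.
Proof.
move=> k_gt0; apply: (cvg_comp (fun w => k * w) (fun x => expR (- x))).
  exact: gt0_cvgMry k_gt0 cvg_id.
exact: cvgr_expR.
Qed.

(* Factor out the dominant term: the sum is [expR (s j * w) * (d j + B w)]
   with [B w --> 0]. *)
Lemma sum_expR_cvgy (n : nat) (s d : 'I_n -> R) (j : 'I_n) :
  0 < d j -> 0 < s j -> (forall i, i != j -> d i != 0 -> s i < s j) ->
  (\sum_i d i * expR (s i * w)) @[w --> +oo] --> +oo.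
Proof.
move=> dj_gt0 sj_gt0 s_lt.
pose B w := \sum_(i | i != j) d i * expR ((s i - s j) * w).
have B_cvg0 : B w @[w --> +oo] --> 0.
  rewrite (_ : 0 = \sum_(i | i != j) (0:R)); last by rewrite big1.
  apply: cvg_big => //; first exact: add_continuous.
  move=> i ij; have [->|di_neq0] := eqVneq (d i) 0.
    under eq_fun do rewrite mul0r; exact: cvg_cst.
  rewrite -[0](mulr0 (d i)); apply: cvgM; first exact: cvg_cst.
  under eq_fun do rewrite -[(s i - s j)]opprB mulNr.
  by apply: expRN_mul_cvgy; rewrite subr_gt0; exact: s_lt.
have factor w : \sum_i d i * expR (s i * w) = expR (s j * w) * (d j + B w).
  rewrite (bigD1 j) //= mulrDr mulrC; congr (_ + _).
  rewrite /B mulr_sumr; apply: eq_bigr => i _.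
  by rewrite mulrCA -expRD mulrBl addrC subrK.
have djB : \forall w \near +oo, d j / 2 < d j + B w.
  apply: (cvgr_gt (d j)); last by rewrite ltr_pdivrMr // ltr_pMr // ltr1n.
  rewrite -[X in _ --> X]addr0; apply: cvgD => //; exact: cvg_cst.
have c_gt0 : 0 < s j * (d j / 2) by rewrite mulr_gt0 // divr_gt0.
apply/cvgryPge => A; near=> w; rewrite factor.
have hB : d j / 2 < d j + B w by near: w.
have w_ge0 : 0 <= w by near: w; apply: nbhs_pinfty_ge; rewrite num_real.
have wA : A / (s j * (d j / 2)) <= w.
  by near: w; apply: nbhs_pinfty_ge; rewrite num_real.
have sjw_le : s j * w <= expR (s j * w).
  by apply: le_trans (expR_ge1Dx _); rewrite lerDr.
apply: (@le_trans _ _ ((s j * w) * (d j / 2))); last first.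
  by apply: ler_pM => //; [rewrite mulr_ge0 // ltW | rewrite ltW // divr_gt0 | exact: ltW].
have := ler_wpM2l (ltW c_gt0) wA.
by rewrite mulrCA mulfV ?gt_eqF // mulr1 mulrAC.
Unshelve. all: by end_near.
Qed.

Section MonomialGrowth.
Variables (n : nat) (s : 'I_n -> R).
Hypotheses (s_gt0 : forall i, 0 < s i) (s_inj : injective s).

(* At [x i = expR (- expR (s i * w))], the monomial [m] takes the value
   [expR (- mnm_growth m w)]. *)
Definition mnm_growth (m : mpoly.multinom n) (w : R) : R :=
  \sum_i (m i)%:R * expR (s i * w).

Definition mnm_slower (m m' : mpoly.multinom n) : Prop :=
  (mnm_growth m' w - mnm_growth m w) @[w --> +oo] --> +oo.

Lemma mnm_slower_trans (m1 m2 m3 : mpoly.multinom n) :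
  mnm_slower m1 m2 -> mnm_slower m2 m3 -> mnm_slower m1 m3.
Proof.
move=> m12 m23; apply/cvgryPge => A; near=> w.
have h23 : A <= mnm_growth m3 w - mnm_growth m2 w by near: w; exact: cvgry_ge.
have h12 : 0 <= mnm_growth m2 w - mnm_growth m1 w by near: w; exact: cvgry_ge.
lra.
Unshelve. all: by end_near.
Qed.

(* The comparison is decided by the largest rate [s j] at which the two
   exponents differ. *)
Lemma mnm_slower_total (m m' : mpoly.multinom n) :
  m != m' -> mnm_slower m m' \/ mnm_slower m' m.
Proof.
move=> mm'.
pose d i : R := (m' i)%:R - (m i)%:R.
have growthB w : mnm_growth m' w - mnm_growth m w = \sum_i d i * expR (s i * w).
  by rewrite /mnm_growth -sumrB; apply: eq_bigr => i _; rewrite mulrBl.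
have [i0 mi0] : exists i, m i != m' i.
  apply: contrapT => all_eq; move/eqP: mm'; apply; apply/mpoly.mnmP => i.
  by apply/eqP/negPn/negP => mi; apply: all_eq; exists i.
have [j mj j_max] := arg_maxP s (P := [pred i | m i != m' i]) mi0.
have d_neq0 i : (d i != 0) = (m i != m' i) by rewrite subr_eq0 eqr_nat eq_sym.
have s_lt i : i != j -> d i != 0 -> s i < s j.
  move=> ij; rewrite d_neq0 => mi.
  have : s i <= s j := j_max i mi.
  rewrite le_eqVlt => /orP[/eqP sij|//].
  by move: ij; rewrite (s_inj sij) eqxx.
have : d j != 0 by rewrite d_neq0.
rewrite neq_lt => /orP[dj_lt0|dj_gt0]; [right|left]; rewrite /mnm_slower.
  under eq_fun do rewrite -opprB growthB -sumrN.
  under eq_fun do under eq_bigr do rewrite -mulNr.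
  apply: (sum_expR_cvgy (j := j)) => //; first by rewrite oppr_gt0.
  by move=> i ij; rewrite oppr_eq0; exact: s_lt.
under eq_fun do rewrite growthB.
exact: (sum_expR_cvgy (j := j)).
Qed.

(* A nonzero polynomial is dominated near [+oo] by the monomial of its support
   that grows slowest. *)
Lemma meval_expR_neq0_near (P : mpoly.mpoly n R) : P != 0 ->
  \forall w \near +oo, mpoly.meval (fun i => expR (- expR (s i * w))) P != 0.
Proof.
move=> P_neq0.
have mevalE w : mpoly.meval (fun i => expR (- expR (s i * w))) P =
    \sum_(m <- mpoly.msupp P) mpoly.mcoeff m P * expR (- mnm_growth m w).
  rewrite mpoly.mevalE; apply: eq_bigr => m _; congr (_ * _).
  rewrite /mnm_growth -sumrN expR_sum; apply: eq_bigr => i _.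
  by rewrite -mulrN expRM_natl.
have supp_neq0 : mpoly.msupp P != [::] by rewrite mpoly.msupp_eq0.
have [m0 m0_in m0_min] := seq_min_exists mnm_slower_total mnm_slower_trans supp_neq0.
pose B w := \sum_(m <- mpoly.msupp P)
  mpoly.mcoeff m P * expR (- (mnm_growth m w - mnm_growth m0 w)).
have factor w : \sum_(m <- mpoly.msupp P) mpoly.mcoeff m P * expR (- mnm_growth m w) =
    expR (- mnm_growth m0 w) * B w.
  rewrite /B mulr_sumr; apply: eq_bigr => m _.
  by rewrite mulrCA -expRD opprB addKr.
have B_cvg : B w @[w --> +oo] --> mpoly.mcoeff m0 P.
  have -> : mpoly.mcoeff m0 P = \sum_(m <- mpoly.msupp P | m \in mpoly.msupp P)
      (if m == m0 then mpoly.mcoeff m P else 0).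
    rewrite -big_seq (big_rem m0) //= eqxx big1_seq ?addr0 // => m /andP[_ m_rem].
    suff /negPf -> : m != m0 by [].
    by apply: contraTneq m_rem => ->; rewrite mem_rem_uniqF // mpoly.msupp_uniq.
  rewrite /B; under eq_fun do rewrite big_seq.
  apply: cvg_big => //; first exact: add_continuous.
  move=> m m_in; case: eqP => [->|/eqP mm0].
    under eq_fun do rewrite subrr oppr0 expR0 mulr1; exact: cvg_cst.
  rewrite -[0](mulr0 (mpoly.mcoeff m P)); apply: cvgM; first exact: cvg_cst.
  exact: cvg_comp (m0_min m m_in mm0) (@cvgr_expR R).
have c0_neq0 : mpoly.mcoeff m0 P != 0 by rewrite -mpoly.mcoeff_msupp.
near=> w.
have Bw_neq0 : B w != 0 by near: w; exact: cvgr_neq0 B_cvg c0_neq0.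
by rewrite mevalE factor mulf_neq0 // gt_eqF // expR_gt0.
Unshelve. all: by end_near.
Qed.

End MonomialGrowth.
End ExpAsymptotics.

Section LebesgueUnitInterval.
Variable R : realType.

Lemma measurable_LR (A : set R) : measurable A -> measurable (A : set (LR R)).
Proof. exact: sub_caratheodory. Qed.

Lemma measurable_fun_LR (D : set (LR R)) (f : R -> R) :
  measurable_fun [set: R] f -> measurable_fun D (f : LR R -> R).
Proof.
move=> mf mD Y mY; apply: measurableI => //.
by have := mf measurableT Y mY; rewrite setTI; exact: measurable_LR.
Qed.

Lemma measurable_I01 : measurable (I01 R).
Proof. exact: measurable_LR. Qed.

Lemma leb_I01 : leb R (I01 R) = 1%:E.
Proof.
change (lebesgue_measure (`[0, 1]%classic : set R) = 1%:E).
by rewrite lebesgue_measure_itv /= lte_fin ltr01 /= sube0.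
Qed.

Lemma not_negligible_itv0 (e : R) : 0 < e ->
  ~ (leb R).-negligible (`]0, e[%classic : set (LR R)).
Proof.
move=> e_gt0 /(negligibleP _ (measurable_LR (measurable_itv _))).
change (lebesgue_measure (`]0, e[%classic : set R) <> 0%E).
by rewrite lebesgue_measure_itv /= lte_fin e_gt0 /= sube0 => -[]; apply/eqP; rewrite gt_eqF.
Qed.

End LebesgueUnitInterval.

Section DoubleExponentials.
Variable R : realType.

(* For [0 < t] this is [expR (- t ^ (- expR r))]; the exponents [expR r] are
   positive and depend injectively on [r]. *)
Definition dexp (r t : R) : R := expR (- expR (expR r * - ln t)).

Lemma dexp_ge0 r t : 0 <= dexp r t.
Proof. exact: expR_ge0. Qed.

Lemma dexp_le1 r t : dexp r t <= 1.
Proof. by rewrite /dexp expR_le1 oppr_le0 expR_ge0. Qed.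

Lemma measurable_dexp r : measurable_fun [set: R] (dexp r).
Proof.
apply: measurableT_comp; first exact: measurable_realfun.measurable_expR.
apply: measurable_realfun.measurable_funN.
apply: measurableT_comp; first exact: measurable_realfun.measurable_expR.
apply: measurable_realfun.measurable_funM; first exact: measurable_cst.
by apply: measurable_realfun.measurable_funN; exact: measurable_realfun.measurable_ln.
Qed.

Definition dexp_poly (n : nat) (r : 'I_n -> R) (P : mpoly.mpoly n R) (t : R) : R :=
  mpoly.meval (fun i => dexp (r i) t) P.

Definition mnorm1 (n : nat) (P : mpoly.mpoly n R) : R :=
  \sum_(m <- mpoly.msupp P) `|mpoly.mcoeff m P|.

Section Poly.
Variables (n : nat) (r : 'I_n -> R) (P : mpoly.mpoly n R).

Lemma measurable_dexp_poly : measurable_fun [set: R] (dexp_poly r P).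
Proof.
rewrite (_ : dexp_poly r P = fun t => \sum_(m <- mpoly.msupp P)
    mpoly.mcoeff m P * \prod_i dexp (r i) t ^+ m i).
  apply: measurable_sum => m; apply: measurable_realfun.measurable_funM.
    exact: measurable_cst.
  apply: measurable_prod => i _; apply: measurable_realfun.measurable_funX.
  exact: measurable_dexp.
by apply/funext => t; rewrite /dexp_poly mpoly.mevalE.
Qed.

Lemma dexp_poly_le_mnorm1 t : `|dexp_poly r P t| <= mnorm1 P.
Proof.
rewrite /dexp_poly mpoly.mevalE; apply: le_trans (ler_norm_sum _ _ _) _.
apply: ler_sum => m _; rewrite normrM -[leRHS]mulr1 ler_wpM2l //.
rewrite normr_prod; apply: prodr_ile1 => i _.
rewrite normr_ge0 normrX exprn_ile1 //.
by rewrite ger0_norm ?dexp_ge0 // dexp_le1.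
Qed.

Hypotheses (r_inj : injective r) (P_neq0 : P != 0).

Lemma dexp_poly_neq0_near0 :
  exists2 e, 0 < e & forall t, 0 < t -> t < e -> dexp_poly r P t != 0.
Proof.
have [M [_ M_near]] := meval_expR_neq0_near (s := fun i => expR (r i))
  (fun i => expR_gt0 _) (fun i j E => r_inj (expR_inj E)) P_neq0.
exists (expR (- M)); first exact: expR_gt0.
move=> t t_gt0 t_lt; apply: M_near.
have : ln t < ln (expR (- M)) by rewrite ltr_ln // posrE expR_gt0.
by rewrite expRK; lra.
Qed.

Lemma integral_dexp_poly_gt0 :
  (0 < \int[leb R]_(t in I01 R) `|dexp_poly r P t|%:E)%E.
Proof.
rewrite lt_neqAle integral_ge0 ?andbT => [|t _]; last by rewrite lee_fin.
apply/eqP => /esym int0.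
have [e e_gt0 P_neq0_near] := dexp_poly_neq0_near0.
have mP := proj2 (measurable_realfun.measurable_EFinP (I01 R) (dexp_poly r P))
  (measurable_fun_LR (D := I01 R) measurable_dexp_poly).
have : (\int[leb R]_(t in I01 R) `|(dexp_poly r P t)%:E|)%E = 0%E.
  by rewrite -int0; apply: eq_integral.
move/(ae_eq_integral_abs _ (@measurable_I01 R) mP) => P_ae0.
have e1_gt0 : 0 < Num.min e 1 by rewrite lt_min e_gt0 ltr01.
apply: (not_negligible_itv0 e1_gt0).
apply: negligibleS P_ae0 => t /=; rewrite in_itv /= lt_min => /andP[t_gt0 /andP[te t1]].
move=> t_ae0; apply/negP: (P_neq0_near _ t_gt0 te); apply/negPn/eqP.
suff [] : (dexp_poly r P t)%:E = 0%E by [].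
by apply: t_ae0; rewrite in_itv /= (ltW t_gt0) (ltW t1).
Qed.

End Poly.
End DoubleExponentials.

Section KilledGenerators.
Variables (R : realType) (I : Type) (lt : I -> I -> Prop) (N : I -> set R).

Definition killed_dexp (r : R) (a : I) (t : R) : R :=
  if pselect (N a t) then 0 else dexp r t.

Hypothesis N_null : forall a, nullset01 (N a).

Section Poly.
Variables (n : nat) (r : 'I_n -> R) (P : mpoly.mpoly n R).
Hypothesis P_cst0 : mpoly.mcoeff mpoly.mnm0 P = 0.

Let f := peval P (killed_dexp \o r).

Lemma peval_killed_dexp_in a t : N a t -> f a t = 0.
Proof.
move=> Nat; rewrite /f /peval /killed_dexp /=.
by destruct (pselect (N a t)); rewrite ?meval_zero.
Qed.

Lemma peval_killed_dexp_notin a t : ~ N a t -> f a t = dexp_poly r P t.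
Proof. by move=> Nat; rewrite /f /peval /killed_dexp /=; destruct (pselect (N a t)). Qed.

Lemma measurable_peval_killed_dexp a : measurable_fun (I01 R) (f a : LR R -> R).
Proof.
rewrite (_ : f a = fun t => \1_(~` N a) t * dexp_poly r P t).
  apply: measurable_realfun.measurable_funM; last first.
    by apply: measurable_fun_LR; exact: measurable_dexp_poly.
  apply: measurable_realfun.measurable_indic; apply: measurableC.
  exact: negligible_sub_caratheodory (N_null a).2.
apply/funext => t; rewrite indicE in_setC; have [Nat|Nat] := pselect (N a t).
  by rewrite peval_killed_dexp_in // (mem_set Nat) mul0r.
by rewrite peval_killed_dexp_notin // (memNset Nat) mul1r.
Qed.

Lemma integral_peval_killed_dexp a :
  (\int[leb R]_(t in I01 R) `|f a t - 0|%:E)%E =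
  (\int[leb R]_(t in I01 R) `|dexp_poly r P t|%:E)%E.
Proof.
under eq_integral do rewrite subr0.
apply: ae_eq_integral.
- exact: measurable_I01.
- apply/measurable_realfun.measurable_EFinP.
  exact: measurableT_comp (@measurable_realfun.normr_measurable R setT)
    (measurable_peval_killed_dexp a).
- apply/measurable_realfun.measurable_EFinP.
  have mP := measurable_fun_LR (D := I01 R) (measurable_dexp_poly r P).
  exact: measurableT_comp (@measurable_realfun.normr_measurable R setT) mP.
- apply: negligibleS (N_null a).2 => t /= f_neq; apply: contrapT => Nat.
  by apply: f_neq => _; rewrite peval_killed_dexp_notin.
Qed.

Hypotheses (r_inj : injective r) (P_neq0 : P != 0).

Lemma peval_killed_dexp_neq0 (a : I) : ~ eq01 f (fun _ _ => 0).
Proof.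
move=> f0; move: (integral_dexp_poly_gt0 r_inj P_neq0).
rewrite -(integral_peval_killed_dexp a) (eq_integral (fun=> 0%E)) ?integral0 ?ltxx //.
by move=> t /[!inE] t01; rewrite f0 // subr0 normr0.
Qed.

Hypothesis N_eventually : forall t, `[0, 1]%classic t ->
  exists b, forall a, lt b a -> N a t.
Hypothesis lt_nomax : forall a, exists b, lt a b.

Lemma ND_peval_killed_dexp : ND lt f.
Proof.
split; first exact: measurable_peval_killed_dexp.
split.
  exists (fun _ => mnorm1 P); split.
    apply/integrableP; split; first exact: measurable_cst.
    rewrite integral_cst; last exact: measurable_I01.
    by rewrite [X in (_ * X)%E](_ : _ = 1%:E) ?mule1 ?ltry //; exact: leb_I01.
  move=> a; apply: aeW => t _; have [Nat|Nat] := pselect (N a t).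
    by rewrite peval_killed_dexp_in // normr0 sumr_ge0.
  by rewrite peval_killed_dexp_notin //; exact: dexp_poly_le_mnorm1.
exists (fun _ => 0); split; first exact: integrable0.
split.
  apply: aeW => t /N_eventually[b Nb] U /= U0; exists b => a ba.
  by rewrite peval_killed_dexp_in; [exact: nbhs_singleton U0 | exact: Nb].
(* the integrals are constant and positive along a sequence without last term *)
move=> /(_ _ (open_ereal_lt' (integral_dexp_poly_gt0 r_inj P_neq0)))[a0 a0_after].
have [a a0a] := lt_nomax a0.
by have := a0_after a a0a; rewrite integral_peval_killed_dexp ltxx.
Qed.

End Poly.

Lemma killed_dexp_inj (a : I) (r s : R) :
  eq01 (killed_dexp r) (killed_dexp s) -> r = s.
Proof.
move=> rs_eq; apply: contrapT => /eqP rs_neq.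
pose rs (i : 'I_2) := if i == ord0 then r else s.
have rs_inj : injective rs.
  move=> [[|[|i]] ?] [[|[|j]] ?] // E; apply: val_inj => //=.
  - by move: E rs_neq; rewrite /rs /= => ->; rewrite eqxx.
  - by move: E rs_neq; rewrite /rs /= => ->; rewrite eqxx.
pose Q : mpoly.mpoly 2 R :=
  mpoly.mpolyX R (mpoly.mnm1 ord0) - mpoly.mpolyX R (mpoly.mnm1 ord_max).
have X01_neq : mpoly.mnm1 (ord_max : 'I_2) != mpoly.mnm1 ord0.
  by apply/negP => /eqP/mpoly.mnmP/(_ ord0); rewrite !mpoly.mnm1E.
have Q_neq0 : Q != 0.
  apply: contraTneq isT => Q0; have := congr1 (mpoly.mcoeff (mpoly.mnm1 ord0)) Q0.
  by rewrite mpoly.mcoeffB !mpoly.mcoeffX eqxx (negPf X01_neq) subr0 mpoly.mcoeff0 => /eqP; rewrite oner_eq0.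
have Q_cst0 : mpoly.mcoeff mpoly.mnm0 Q = 0.
  by rewrite mpoly.mcoeffB !mpoly.mcoeffX !mpoly.mnm1_eq0 subrr.
apply: (peval_killed_dexp_neq0 Q_cst0 rs_inj Q_neq0 a) => b t t01.
by rewrite /peval mpoly.mevalB !mpoly.mevalXU /= /rs /= rs_eq // subrr.
Qed.

End KilledGenerators.

Section AdditivityOfNull.
Variables (R : realType) (I : Type) (lt : I -> I -> Prop).
Hypotheses (lt_ord : initial_ordinal lt) (addN : has_card_addN R I).

Lemma nullset01_bigcup_lt (F : I -> set R) (a : I) :
  (forall b, nullset01 (F b)) ->
  nullset01 (\bigcup_(j : {b : I | lt b a}) F (sval j)).
Proof.
by move=> F_null; apply: addN.2 (lt_ord.2.2.2.2 a) _ _ => j; exact: F_null.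
Qed.

(* If [a] were maximal, the non-null union witnessing [add(N)] would be
   [F a] together with the null union of its [lt]-predecessors. *)
Lemma initial_ordinal_nomax (a : I) : exists b, lt a b.
Proof.
have [[F [F_null F_union]] _] := addN.
apply: contrapT => a_max; apply: F_union; split.
  by move=> t [i _ /(F_null i).1].
have Fa_lt_null := nullset01_bigcup_lt a F_null.
apply: negligibleS (negligibleU (F_null a).2 Fa_lt_null.2) => t [i _ Fit].
have [ia|[<-|ai]] := lt_ord.2.2.1 i a; first by right; exists (exist _ i ia).
  by left.
by case: a_max; exists i.
Qed.

Lemma has_card_addN_inhabited : inhabited I.
Proof.
have [[F [F_null F_union]] _] := addN.
apply: contrapT => I_empty; apply: F_union; split.
  by move=> t [i]; case: I_empty.
by apply: negligibleS (negligible_set0 _) => t [i]; case: I_empty.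
Qed.

End AdditivityOfNull.

Theorem mainTheorem14 (R : realType) (I : Type) (lt : I -> I -> Prop) :
  initial_ordinal lt ->
  has_card_addN R I ->
  has_card_covN R I ->
  strongly_c_algebrable (@ND R I lt).
Proof.
move=> lt_ord addN [[C [C_null C_cover]] _].
pose N a := \bigcup_(j : {b : I | lt b a}) C (sval j).
have N_null a : nullset01 (N a) by exact: nullset01_bigcup_lt.
have N_eventually t : `[0, 1]%classic t -> exists b, forall a, lt b a -> N a t.
  by move=> /C_cover[b _ Cbt]; exists b => a ba; exists (exist _ b ba).
have [a0] := has_card_addN_inhabited addN.
exists (killed_dexp N); split; first exact: killed_dexp_inj.
move=> n r r_inj P [m Pm_neq0] P_cst0.
have P_neq0 : P != 0 by apply: contraNneq Pm_neq0 => ->; rewrite mpoly.mcoeff0.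
split; first exact: peval_killed_dexp_neq0.
exact: ND_peval_killed_dexp (initial_ordinal_nomax lt_ord addN).
Qed.
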